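(* Let $t=\alpha^\mu\beta^\nu$ with $\mu\in\mathbb{Z}_{\ge0}^m$ and $\nu\in\{0,\dots,m\}^n$ non-increasing. If $t$ has a sorted syl-representation, then $t$ has a sorted-flushed syl-representation.
   Context: For $M\in\{0,1\}^{m\times n}$: $rs(M)=(\sum_j M_{ij})_i$; $cs(M)=(\sum_i M_{ij})_j$; $ars(M)=(i+\sum_j M_{ij})_{i=1..m}$; $acs(M)=(j+\sum_i M_{ij})_{j=1..n}$. $PC(A,B)$ means $\{acs(A)_1,\dots,acs(A)_n,ars(B)_1,\dots,ars(B)_m\}=\{1,\dots,m+n\}$. A syl-representation of $\alpha^\mu\beta^\nu$ is a pair $(\mathcal{S}_1,\mathcal{S}_2)$ in $\{0,1\}^{m\times n}$ with $rs(\mathcal{S}_1)=\mu$, $cs(\mathcal{S}_2)=\nu$, $PC(\mathcal{S}_1,\mathcal{S}_2)$. $M$ is bottom-left flushed if whenever $M_{ij}=1$, also $M_{i'j'}=1$ for all $i'\ge i$, $j'\le j$. A pair $(A,B)$ is sorted if $acs(A)$ and $ars(B)$ are strictly increasing, flushed if $B$ is bottom-left flushed, sorted-flushed if both. *)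

From mathcomp Require Import all_boot all_order all_algebra.
Set Implicit Arguments. Unset Strict Implicit. Unset Printing Implicit Defensive.

(* 0/1 matrices are 'M[bool]_(m,n); row/column indices are 0-based ordinals,
   so the paper's index i (1-based) corresponds to the ordinal i-1. *)
Section Defs.
Variables m n : nat.
Implicit Types M A B : 'M[bool]_(m, n).

Definition rs M (i : 'I_m) : nat := \sum_(j < n) (M i j : nat).
Definition cs M (j : 'I_n) : nat := \sum_(i < m) (M i j : nat).
(* augmented sums: paper's i + sum_j M_ij with 1-based i *)
Definition ars M (i : 'I_m) : nat := i.+1 + rs M i.
Definition acs M (j : 'I_n) : nat := j.+1 + cs M j.

Definition PC A B : Prop :=
  [seq acs A j | j <- enum 'I_n] ++ [seq ars B i | i <- enum 'I_m]
    =i iota 1 (m + n).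

Definition syl_rep (mu : 'I_m -> nat) (nu : 'I_n -> nat) A B : Prop :=
  (forall i, rs A i = mu i) /\ (forall j, cs B j = nu j) /\ PC A B.

Definition bottom_left_flushed M : Prop :=
  forall (i i' : 'I_m) (j j' : 'I_n),
    M i j -> (i <= i')%N -> (j' <= j)%N -> M i' j'.

Definition sorted_pair A B : Prop :=
  (forall j j' : 'I_n, (j < j')%N -> (acs A j < acs A j')%N) /\
  (forall i i' : 'I_m, (i < i')%N -> (ars B i < ars B i')%N).

Definition flushed_pair A B : Prop := bottom_left_flushed B.

Definition sorted_flushed_pair A B : Prop := sorted_pair A B /\ flushed_pair A B.
End Defs.

From mathcomp Require Import all_boot all_order all_algebra fingroup perm zify.
Set Implicit Arguments. Unset Strict Implicit. Unset Printing Implicit Defensive.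

(* Call (x, y, j) a violation of B if x < y, B x j = 1 and B y j = 0.  Given a
   sorted representation (A, B) with a violation, permute the rows of B inside
   its blocks of equal row sums so that the violation sits at the first row p
   of the block of x and the last row q of the block of y, then move the 1 from
   (p, j) to (q, j).  This lowers ars(B)_p and raises ars(B)_q by one and keeps
   ars(B) sorted.  The new values ars(B)_p - 1 and ars(B)_q + 1 were augmented
   column sums of A, in columns j1 < j2; column j2 of A then has more ones than
   column j1, and moving a 1 of A from column j2 to column j1 in a suitable row
   exchanges the two values, so PC and sortedness survive.  Since the sum of
   squared row sums of B strictly increases and is bounded, we reach a B
   without violations; its columns are then filled from the bottom, and
   non-increasing column sums make it bottom-left flushed. *)

Lemma sum_update1 N (F G : 'I_N -> nat) (a : 'I_N) :
  (forall i, i != a -> G i = F i) ->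
  \sum_(i < N) G i + F a = \sum_(i < N) F i + G a.
Proof.
move=> GF; rewrite (bigD1 a) //= [in RHS](bigD1 a) //= (eq_bigr _ GF).
by rewrite addnAC addnC [RHS]addnAC [RHS]addnC [G a + F a]addnC.
Qed.

Lemma sum_update2 N (F G : 'I_N -> nat) (a b : 'I_N) : a != b ->
  (forall i, i != a -> i != b -> G i = F i) ->
  \sum_(i < N) G i + F a + F b = \sum_(i < N) F i + G a + G b.
Proof.
move=> ab GF; pose H i := if i == a then G a else F i.
have HF := @sum_update1 N F H a (fun i ia => ifN _ _ ia).
have GH : \sum_(i < N) G i + H b = \sum_(i < N) H i + G b.
  apply: sum_update1 => i ib; rewrite /H; case: eqP => [-> //|/eqP ia].
  exact: GF.
move: HF GH; rewrite /H eqxx eq_sym (negbTE ab); lia.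
Qed.

Lemma sum_bool_le N (F : 'I_N -> bool) : \sum_(i < N) (F i : nat) <= N.
Proof.
rewrite -[X in _ <= X]card_ord -sum1_card; apply: leq_sum => i _; exact: leq_b1.
Qed.

Lemma sum_bool_lt_exists N (F G : 'I_N -> bool) :
  \sum_(i < N) (F i : nat) < \sum_(i < N) (G i : nat) -> exists i, G i && ~~ F i.
Proof.
move=> FG; apply/existsP; apply: contraLR FG => /existsPn noGF; rewrite -leqNgt.
by apply: leq_sum => i _; move: (noGF i); case: (G i); case: (F i).
Qed.

Lemma ord_ltn_neq N (k l : 'I_N) : k < l -> k != l.
Proof. by move=> kl; exact: (negbT (ltn_eqF kl)). Qed.

Lemma ord_gtn_neq N (k l : 'I_N) : k < l -> l != k.
Proof. by move=> kl; rewrite eq_sym ord_ltn_neq. Qed.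

Lemma incr_gap N (h : 'I_N -> nat) : {homo h : i j / (i < j)%N} ->
  forall i j : 'I_N, i <= j -> h i + (j - i) <= h j.
Proof.
move=> h_incr i; suff gap k (j : 'I_N) : j = i + k :> nat -> h i + k <= h j.
  by move=> j ij; apply: gap; rewrite subnKC.
elim: k j => [|k IH] j jik; first by rewrite addn0 (_ : j = i) //; apply: ord_inj; lia.
have j'N : i + k < N by have := ltn_ord j; lia.
have := IH (Ordinal j'N) erefl; have := h_incr (Ordinal j'N) j ltac:(rewrite /=; lia).
lia.
Qed.

Lemma incr_update N (h h' : 'I_N -> nat) (a b : 'I_N) : a < b ->
  {homo h : i j / (i < j)%N} ->
  (forall i, i != a -> i != b -> h' i = h i) -> h' a < h' b ->
  (forall i : 'I_N, i < a -> h i < h' a) ->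
  (forall i : 'I_N, a < i -> i != b -> h' a < h i) ->
  (forall i : 'I_N, i < b -> i != a -> h i < h' b) ->
  (forall i : 'I_N, b < i -> h' b < h i) ->
  {homo h' : i j / (i < j)%N}.
Proof.
move=> ab h_incr h'E h'ab ltA gtA ltB gtB i j.
have [-> ij | ia] := eqVneq i a.
  have [-> // | jb] := eqVneq j b.
  by rewrite (h'E j) ?gtA ?(ord_gtn_neq ij).
have [-> ij | ib ij] := eqVneq i b.
  by rewrite (h'E j) ?gtB ?(ord_gtn_neq ij) ?(ord_gtn_neq (ltn_trans ab ij)).
rewrite (h'E i) //; move: ij.
have [-> ij | ja] := eqVneq j a; first exact: ltA.
have [-> ij | jb ij] := eqVneq j b; first exact: ltB.
by rewrite (h'E j) // h_incr.
Qed.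

Lemma first_of_level N (f : 'I_N -> nat) (x : 'I_N) : {homo f : i j / (i <= j)%N} ->
  exists p : 'I_N, [/\ p <= x, f p = f x & forall i : 'I_N, i < p -> f i < f p].
Proof.
move=> f_mono.
case: (@arg_minnP _ x (fun i => f i == f x) (@nat_of_ord N) (eqxx _)) => p /eqP fpx p_min.
exists p; split=> // [|i ip]; first exact: p_min.
rewrite ltn_neqAle f_mono ?(ltnW ip) // andbT; apply: contraTneq ip => fip.
by rewrite -leqNgt p_min // fip fpx.
Qed.

Lemma last_of_level N (f : 'I_N -> nat) (y : 'I_N) : {homo f : i j / (i <= j)%N} ->
  exists q : 'I_N, [/\ y <= q, f q = f y & forall i : 'I_N, q < i -> f q < f i].
Proof.
move=> f_mono.
case: (@arg_maxnP _ y (fun i => f i == f y) (@nat_of_ord N) (eqxx _)) => q /eqP fqy q_max.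
exists q; split=> // [|i qi]; first exact: q_max.
rewrite ltn_neqAle f_mono ?(ltnW qi) // andbT; apply: contraTneq qi => fqi.
by rewrite -leqNgt; apply: q_max; rewrite -fqi fqy.
Qed.

Lemma level_perm N (f : 'I_N -> nat) (p x y q : 'I_N) :
  p <= x -> x < y -> y <= q -> f p = f x -> f q = f y ->
  exists s : {perm 'I_N}, [/\ s p = x, s q = y & forall i, f (s i) = f i].
Proof.
move=> px xy yq fpx fqy.
have py : p < y := leq_ltn_trans px xy.
have [pq xq] : p < q /\ x < q by split; apply: leq_trans yq.
have tperm_f a b : f a = f b -> forall i, f (tperm a b i) = f i.
  by move=> fab i; case: tpermP => // ->.
exists (tperm q y * tperm p x)%g; split.
- by rewrite permM (tpermD (ord_gtn_neq pq) (ord_gtn_neq py)) tpermL.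
- by rewrite permM tpermL (tpermD (ord_ltn_neq py) (ord_ltn_neq xy)).
- by move=> i; rewrite permM !tperm_f.
Qed.

Definition unit_transfer N (h h' : 'I_N -> nat) (p q : 'I_N) : Prop :=
  [/\ p < q, h' p + 1 = h p, h' q = h q + 1 & forall i, i != p -> i != q -> h' i = h i].

Section Matrices.
Variables m n : nat.
Implicit Types M A B : 'M[bool]_(m, n).

Lemma rs_tr M (j : 'I_n) : rs (trmx M) j = cs M j.
Proof. by apply: eq_bigr => i _; rewrite mxE. Qed.

Lemma cs_tr M (i : 'I_m) : cs (trmx M) i = rs M i.
Proof. by apply: eq_bigr => j _; rewrite mxE. Qed.

Lemma rs_row_perm (s : {perm 'I_m}) M i : rs (row_perm s M) i = rs M (s i).
Proof. by apply: eq_bigr => j _; rewrite mxE. Qed.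

Lemma cs_row_perm (s : {perm 'I_m}) M j : cs (row_perm s M) j = cs M j.
Proof.
by rewrite /cs [RHS](reindex_inj (@perm_inj _ s)); apply: eq_bigr => i _; rewrite mxE.
Qed.

Lemma rs_le M i : rs M i <= n.
Proof. exact: sum_bool_le. Qed.

Definition move_one M (i i' : 'I_m) (j : 'I_n) : 'M[bool]_(m, n) :=
  \matrix_(r, c) if c == j then (r != i) && ((r == i') || M r c) else M r c.

Lemma move_oneE M i i' j r c :
  move_one M i i' j r c = if c == j then (r != i) && ((r == i') || M r c) else M r c.
Proof. exact: mxE. Qed.

Section MoveOne.
Variables (M : 'M[bool]_(m, n)) (i i' : 'I_m) (j : 'I_n).
Hypotheses (Mij : M i j) (Mi'j : ~~ M i' j).

Let i'_neq_i : i' != i. Proof. by apply: contraNneq Mi'j => ->. Qed.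
Let i_neq_i' : i != i'. Proof. by rewrite eq_sym i'_neq_i. Qed.

Lemma cs_move_one c : cs (move_one M i i' j) c = cs M c.
Proof.
have [-> | cj] := eqVneq c j; last by apply: eq_bigr => r _; rewrite move_oneE (negbTE cj).
have := @sum_update2 m (fun r => M r j : nat) (fun r => move_one M i i' j r j : nat) i i'
  i_neq_i' (fun r ri ri' => ltac:(by rewrite /= move_oneE eqxx ri (negbTE ri'))).
rewrite !move_oneE !eqxx i'_neq_i Mij (negbTE Mi'j) /= !addn0.
by move/addIn.
Qed.

Let move_one_row r : forall c, c != j -> move_one M i i' j r c = M r c.
Proof. by move=> c cj; rewrite move_oneE (negbTE cj). Qed.

Lemma rs_move_one_src : rs (move_one M i i' j) i + 1 = rs M i.
Proof.
have := @sum_update1 n (fun c => M i c : nat) (fun c => move_one M i i' j i c : nat) j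
  (fun c cj => ltac:(by rewrite /= move_one_row)).
by rewrite !move_oneE !eqxx Mij /= addn0.
Qed.

Lemma rs_move_one_dst : rs (move_one M i i' j) i' = rs M i' + 1.
Proof.
have := @sum_update1 n (fun c => M i' c : nat) (fun c => move_one M i i' j i' c : nat) j
  (fun c cj => ltac:(by rewrite /= move_one_row)).
by rewrite !move_oneE !eqxx i'_neq_i (negbTE Mi'j) /= addn0.
Qed.

Lemma rs_move_one_other r : r != i -> r != i' -> rs (move_one M i i' j) r = rs M r.
Proof.
move=> ri ri'; apply: eq_bigr => c _.
by rewrite move_oneE ri (negbTE ri'); case: eqP => // ->.
Qed.
End MoveOne.

Definition potential M := \sum_(i < m) rs M i ^ 2.

Lemma potential_le M : potential M <= m * n ^ 2.
Proof.
apply: (@leq_trans (\sum_(i < m) n ^ 2)); last by rewrite sum_nat_const card_ord.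
by apply: leq_sum => i _; rewrite leq_exp2r ?rs_le.
Qed.

Definition pc_values (A B : 'M[bool]_(m, n)) :=
  [seq acs A j | j <- enum 'I_n] ++ [seq ars B i | i <- enum 'I_m].

Lemma pc_valuesP A B v :
  reflect ((exists j, acs A j = v) \/ (exists i, ars B i = v)) (v \in pc_values A B).
Proof.
rewrite mem_cat; apply: (iffP orP).
  by case=> /mapP [k _ ->]; [left | right]; exists k.
by case=> [[k <-] | [k <-]]; [left | right]; apply: map_f; rewrite mem_enum.
Qed.

Lemma PC_disjoint A B : PC A B -> forall j i, acs A j != ars B i.
Proof.
move=> pcAB j i; have : uniq (pc_values A B).
  apply: leq_size_uniq (iota_uniq 1 (m + n)) _ _; first by move=> v; rewrite pcAB.
  by rewrite size_cat !size_map size_iota -!enumT !size_enum_ord addnC.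
rewrite cat_uniq => /and3P[_ /hasPn disj _]; apply/eqP => ji.
by move: (disj _ (map_f (ars B) (mem_enum _ i))); rewrite -ji map_f ?mem_enum.
Qed.

Lemma PC_acs_exists A B v : PC A B -> 0 < v <= m + n ->
  (forall i, ars B i != v) -> exists j, acs A j = v.
Proof.
move=> pcAB v_range not_ars.
have : v \in pc_values A B by rewrite pcAB mem_iota; lia.
by case/pc_valuesP => // [[i /eqP]]; rewrite (negbTE (not_ars i)).
Qed.

Section Exchange.
Variables (A B A' B' : 'M[bool]_(m, n)) (j1 j2 : 'I_n) (p q : 'I_m).
Hypotheses (A'j1 : acs A' j1 = ars B p) (A'j2 : acs A' j2 = ars B q).
Hypotheses (B'p : ars B' p = acs A j1) (B'q : ars B' q = acs A j2).
Hypotheses (A'E : forall j, j != j1 -> j != j2 -> acs A' j = acs A j).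
Hypotheses (B'E : forall i, i != p -> i != q -> ars B' i = ars B i).

Lemma pc_values_exchange : {subset pc_values A' B' <= pc_values A B}.
Proof.
move=> v /pc_valuesP[[j <-] | [i <-]]; apply/pc_valuesP.
  have [-> | jj1] := eqVneq j j1; first by right; exists p.
  have [-> | jj2] := eqVneq j j2; first by right; exists q.
  by left; exists j; rewrite A'E.
have [-> | ip] := eqVneq i p; first by left; exists j1.
have [-> | iq] := eqVneq i q; first by left; exists j2.
by right; exists i; rewrite B'E.
Qed.
End Exchange.

Lemma PC_exchange A B A' B' j1 j2 p q :
  acs A' j1 = ars B p -> acs A' j2 = ars B q ->
  ars B' p = acs A j1 -> ars B' q = acs A j2 ->
  (forall j, j != j1 -> j != j2 -> acs A' j = acs A j) ->
  (forall i, i != p -> i != q -> ars B' i = ars B i) ->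
  PC A B -> PC A' B'.
Proof.
move=> A'j1 A'j2 B'p B'q A'E B'E pcAB v; rewrite -pcAB; apply/idP/idP.
  exact: (pc_values_exchange A'j1 A'j2 B'p B'q A'E B'E).
apply: (pc_values_exchange (esym B'p) (esym B'q) (esym A'j1) (esym A'j2)).
  by move=> j jj1 jj2; rewrite A'E.
by move=> i ip iq; rewrite B'E.
Qed.

Lemma ars_incr_rs_mono B : {homo ars B : i i' / (i < i')%N} -> {homo rs B : i i' / (i <= i')%N}.
Proof. by move=> sB i i' ii'; have := incr_gap sB ii'; rewrite /ars; lia. Qed.

Lemma sorted_row_shift B (x y : 'I_m) (j : 'I_n) :
  {homo ars B : i i' / (i < i')%N} -> x < y -> B x j -> ~~ B y j ->
  exists (p q : 'I_m) (B' : 'M[bool]_(m, n)), unit_transfer (ars B) (ars B') p q /\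
    [/\ forall c, cs B' c = cs B c, {homo ars B' : i i' / (i < i')%N}
       & potential B < potential B'].
Proof.
move=> sB xy Bxj Byj; have rs_mono := ars_incr_rs_mono sB.
have [p [px rspx p_first]] := first_of_level x rs_mono.
have [q [yq rsqy q_last]] := last_of_level y rs_mono.
have pq : p < q by apply: leq_ltn_trans px (leq_trans xy yq).
have [s [sp sq rs_s]] := level_perm px xy yq rspx rsqy.
pose B1 := row_perm s B.
have B1pj : B1 p j by rewrite mxE sp.
have B1qj : ~~ B1 q j by rewrite mxE sq.
pose B' := move_one B1 p q j.
have rsB'p : rs B' p + 1 = rs B p by rewrite rs_move_one_src // rs_row_perm rs_s.
have rsB'q : rs B' q = rs B q + 1 by rewrite rs_move_one_dst // rs_row_perm rs_s.
have rsB'E i : i != p -> i != q -> rs B' i = rs B i.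
  by move=> ip iq; rewrite rs_move_one_other // rs_row_perm rs_s.
have arsB'E i : i != p -> i != q -> ars B' i = ars B i by move=> ip iq; rewrite /ars rsB'E.
exists p, q, B'; split; first by split=> //; rewrite /ars; lia.
split.
- by move=> c; rewrite cs_move_one // cs_row_perm.
- apply: (incr_update pq sB arsB'E).
  + have := sB _ _ pq; rewrite /ars; lia.
  + by move=> i ip; have := p_first i ip; rewrite /ars; lia.
  + by move=> i pi _; have := sB _ _ pi; rewrite /ars; lia.
  + by move=> i iq _; have := sB _ _ iq; rewrite /ars; lia.
  + by move=> i qi; have := q_last i qi; rewrite /ars; lia.
- have := @sum_update2 m (fun i => rs B i ^ 2) (fun i => rs B' i ^ 2) p q
    (ord_ltn_neq pq) (fun i ip iq => ltac:(by rewrite /= rsB'E)).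
  have := rs_mono _ _ (ltnW pq); have : 0 < rs B x by rewrite /rs (bigD1 j) //= Bxj.
  rewrite /potential -rspx -rsB'p rsB'q; nia.
Qed.
End Matrices.

Lemma sorted_col_shift m n (A B B' : 'M[bool]_(m, n)) (p q : 'I_m) :
  PC A B -> {homo acs A : j j' / (j < j')%N} -> {homo ars B : i i' / (i < i')%N} ->
  {homo ars B' : i i' / (i < i')%N} ->
  unit_transfer (ars B) (ars B') p q ->
  exists A', [/\ forall i, rs A' i = rs A i, {homo acs A' : j j' / (j < j')%N} & PC A' B'].
Proof.
move=> pcAB sA sB sB' [pq B'p B'q B'E].
have new_p i : ars B i != ars B' p.
  apply/eqP; case: (ltngtP i p) => [ip | pi | /ord_inj ->]; last lia.
    by have := sB' _ _ ip; rewrite B'E ?(ord_ltn_neq ip) ?(ord_ltn_neq (ltn_trans ip pq)); lia.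
  by have := sB _ _ pi; lia.
have new_q i : ars B i != ars B' q.
  apply/eqP; case: (ltngtP i q) => [iq | qi | /ord_inj ->]; last lia.
    by have := sB _ _ iq; lia.
  by have := sB' _ _ qi; rewrite (B'E i) ?(ord_gtn_neq qi) ?(ord_gtn_neq (ltn_trans pq qi)); lia.
have ars_range i : 0 < ars B' i <= m + n.
  by have := rs_le B' i; have := ltn_ord i; rewrite /ars; lia.
have [j1 Aj1] := PC_acs_exists pcAB (ars_range p) new_p.
have [j2 Aj2] := PC_acs_exists pcAB (ars_range q) new_q.
have j12 : j1 < j2.
  rewrite ltnNge; apply/negP => j21; have := incr_gap sA j21; have := sB' _ _ pq; lia.
have above_j1 (b : 'I_n) : j1 < b -> ars B p < acs A b.
  by move=> j1b; have := sA _ _ j1b; have := PC_disjoint pcAB b p; lia.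
have below_j2 (a : 'I_n) : a < j2 -> acs A a < ars B q.
  by move=> aj2; have := sA _ _ aj2; have := PC_disjoint pcAB a q; lia.
(* The augmented column sums jump by at least 2 right after [j1]. *)
have [k /andP[Akj2 Akj1]] : exists k, A k j2 && ~~ A k j1.
  apply: sum_bool_lt_exists; change (cs A j1 < cs A j2).
  have j1'n : j1.+1 < n by have := ltn_ord j2; lia.
  have := above_j1 (Ordinal j1'n) (ltnSn j1); have := incr_gap sA (j12 : Ordinal j1'n <= j2).
  by move: Aj1 Aj2; rewrite /acs /=; lia.
have ATj2 : trmx A j2 k by rewrite mxE.
have ATj1 : ~~ trmx A j1 k by rewrite mxE.
pose A' := trmx (move_one (trmx A) j2 j1 k).
have A'j1 : acs A' j1 = ars B p.
  by move: Aj1; rewrite /acs cs_tr rs_move_one_dst // rs_tr; lia.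
have A'j2 : acs A' j2 = ars B q.
  by move: Aj2 (rs_move_one_src j1 ATj2); rewrite /acs cs_tr rs_tr; lia.
have A'E j : j != j1 -> j != j2 -> acs A' j = acs A j.
  by move=> jj1 jj2; rewrite /acs cs_tr rs_move_one_other // rs_tr.
exists A'; split.
- by move=> i; rewrite rs_tr cs_move_one // cs_tr.
- apply: (incr_update j12 sA A'E); rewrite ?A'j1 ?A'j2.
  + exact: sB.
  + by move=> i ij1; have := sA _ _ ij1; lia.
  + by move=> i j1i _; apply: above_j1.
  + by move=> i ij2 _; apply: below_j2.
  + by move=> i j2i; have := sA _ _ j2i; lia.
- apply: (PC_exchange A'j1 A'j2 (esym Aj1) (esym Aj2) A'E B'E pcAB).
Qed.

Lemma sorted_rep_step m n mu nu (A B : 'M[bool]_(m, n)) (x y : 'I_m) (j : 'I_n) :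
  syl_rep mu nu A B -> sorted_pair A B -> x < y -> B x j -> ~~ B y j ->
  exists A' B', [/\ syl_rep mu nu A' B', sorted_pair A' B' & potential B < potential B'].
Proof.
move=> [rsA [csB pcAB]] [sA sB] xy Bxj Byj.
have [p [q [B' [shift [csB' sB' potB]]]]] := sorted_row_shift sB xy Bxj Byj.
have [A' [rsA' sA' pcA'B']] := sorted_col_shift pcAB sA sB sB' shift.
exists A', B'; split=> //; split=> [i | ]; first by rewrite rsA'.
by split=> // c; rewrite csB'.
Qed.

Lemma flushed_of_col_upward m n (B : 'M[bool]_(m, n)) :
  (forall j j' : 'I_n, j <= j' -> cs B j' <= cs B j) ->
  (forall j (x y : 'I_m), x <= y -> B x j -> B y j) -> bottom_left_flushed B.
Proof.
move=> cs_mono up i i' j j' Bij ii' j'j; have Bi'j := up _ _ _ ii' Bij.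
apply: contraT => Bi'j'.
have below : cs B j' <= \sum_(x < m) (i' < x : nat).
  apply: leq_sum => x _; case Bxj': (B x j') => //; case: (ltnP i' x) => // xi'.
  by rewrite (up _ _ _ xi' Bxj') in Bi'j'.
have above : \sum_(x < m) (i' <= x : nat) <= cs B j.
  by apply: leq_sum => x _; case: (leqP i' x) => // i'x; rewrite (up _ _ _ i'x Bi'j).
have le_lt x : x != i' -> (i' <= x : nat) = (i' < x : nat).
  by move=> xi'; rewrite ltn_neqAle eq_sym xi'.
have shift : \sum_(x < m) (i' <= x : nat) = \sum_(x < m) (i' < x : nat) + 1.
  move: (sum_update1 le_lt); rewrite /= ltnn leqnn addn0; exact: id.
by have := cs_mono _ _ j'j; lia.
Qed.

Lemma flushed_or_violation m n (nu : 'I_n -> nat) (B : 'M[bool]_(m, n)) :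
  (forall j j' : 'I_n, j <= j' -> nu j' <= nu j) -> (forall j, cs B j = nu j) ->
  bottom_left_flushed B \/ exists j (x y : 'I_m), [/\ x < y, B x j & ~~ B y j].
Proof.
move=> nu_mono csB.
case: (boolP [exists j : 'I_n, exists x : 'I_m, exists y : 'I_m, [&& x < y, B x j & ~~ B y j]]).
  by case/existsP=> j /existsP[x /existsP[y /and3P[]]]; right; exists j, x, y.
move/existsPn=> none; left; apply: flushed_of_col_upward => [j j' jj' | j x y].
  by rewrite !csB nu_mono.
rewrite leq_eqVlt => /orP[/eqP/ord_inj -> // | xy] Bxj; apply: contraT => Byj.
by move/existsPn: (none j) => /(_ x)/existsPn/(_ y); rewrite xy Bxj Byj.
Qed.

Theorem mainTheorem8 (m n : nat) (mu : 'I_m -> nat) (nu : 'I_n -> nat)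
  (Hnu_range : forall j : 'I_n, (nu j <= m)%N)
  (Hnu_noninc : forall j j' : 'I_n, (j <= j')%N -> (nu j' <= nu j)%N) :
  (exists A B : 'M[bool]_(m, n), syl_rep mu nu A B /\ sorted_pair A B) ->
  exists A B : 'M[bool]_(m, n), syl_rep mu nu A B /\ sorted_flushed_pair A B.
Proof.
move=> [A [B]]; move Ed: (m * n ^ 2 - potential B) => d.
elim/ltn_ind: d A B Ed => d IH A B Ed [repAB sortAB].
have [flushedB | [j [x [y [xy Bxj Byj]]]]] := flushed_or_violation Hnu_noninc repAB.2.1.
  by exists A, B; split; last split.
have [A' [B' [repAB' sortAB' potB]]] := sorted_rep_step repAB sortAB xy Bxj Byj.
apply: (IH _ _ A' B' erefl); last by split.
by rewrite -Ed; have := potential_le B'; lia.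
Qed.
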